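(* Let $$A= \begin{pmatrix} 1& -2& 2\\ 2&-1& 2\\ 2&-2& 3 \end{pmatrix},\quad B= \begin{pmatrix} 1& 2& 2\\ 2&1& 2\\ 2&2& 3 \end{pmatrix},\quad C= \begin{pmatrix} -1& 2& 2\\ -2&1& 2\\ -2&2& 3 \end{pmatrix},$$ and let $P=(x,y,z)$ be a primitive Pythagorean triple. Then the points of $\mathbb{R}^3$ with coordinates $AP^\top$, $BP^\top$, $CP^\top$ form a triangle that is not a right triangle (none of its angles equals $\pi/2$).
   Context: A primitive Pythagorean triple is a triple $(x,y,z)$ of positive integers with $x^2+y^2=z^2$, $\gcd(x,y)=1$ and $x$ odd. Triples are regarded as row vectors and $\top$ denotes transpose; $\mathbb{R}^3$ carries the Euclidean metric. *)

From HB Require Import structures.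
From mathcomp Require Import all_boot all_order all_algebra.
From mathcomp Require Import all_classical all_reals all_analysis.
Set Implicit Arguments. Unset Strict Implicit. Unset Printing Implicit Defensive.
Import Order.TTheory GRing.Theory Num.Theory.
Local Open Scope ring_scope.

Definition mx3 (r0 r1 r2 : int * int * int) : 'M[int]_3 :=
  \matrix_(i < 3, j < 3)
    let r := nth r0 [:: r0; r1; r2] i in
    nth 0 [:: r.1.1; r.1.2; r.2] j.

Definition matA : 'M[int]_3 := mx3 (1, -2, 2) (2, -1, 2) (2, -2, 3).
Definition matB : 'M[int]_3 := mx3 (1, 2, 2) (2, 1, 2) (2, 2, 3).
Definition matC : 'M[int]_3 := mx3 (-1, 2, 2) (-2, 1, 2) (-2, 2, 3).

Definition primitive_pyth (x y z : nat) : Prop :=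
  [/\ (0 < x)%N /\ (0 < y)%N /\ (0 < z)%N, (x ^ 2 + y ^ 2)%N = (z ^ 2)%N,
      coprime x y & odd x].

Definition trip (x y z : nat) : 'rV[int]_3 :=
  \row_(j < 3) (nth 0 [:: x; y; z] j)%:Z.

Definition pt (R : realType) (M : 'M[int]_3) (P : 'rV[int]_3) : 'cV[R]_3 :=
  map_mx (fun k : int => k%:~R) (M *m P^T).

Definition dot3 (R : realType) (u v : 'cV[R]_3) : R := (u^T *m v) 0 0.
Definition norm3 (R : realType) (u : 'cV[R]_3) : R := Num.sqrt (dot3 u u).
Definition vangle (R : realType) (u v : 'cV[R]_3) : R :=
  acos (dot3 u v / (norm3 u * norm3 v)).

Definition tri_angle (R : realType) (p q r : 'cV[R]_3) : R :=
  vangle (q - p) (r - p).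

Definition is_triangle (R : realType) (p q r : 'cV[R]_3) : Prop :=
  \rank (row_mx (q - p) (r - p)) = 2%N.

Definition right_triangle (R : realType) (p q r : 'cV[R]_3) : Prop :=
  tri_angle p q r = pi / 2 \/ tri_angle q r p = pi / 2 \/
  tri_angle r p q = pi / 2.

From HB Require Import structures.
From mathcomp Require Import all_boot all_order all_algebra.
From mathcomp Require Import all_classical all_reals all_analysis.
From mathcomp Require Import ring lra zify.

(* The edge vectors of the triangle do not involve z: b - a = 2y (2, 1, 2),
   c - b = -2x (1, 2, 2) and c - a = 2 (2y - x, y - 2x, 2y - 2x), so the
   triangle is non-degenerate.  The dot products of the two edges at a, b and c
   are 4y (9y - 8x), 32xy and 4x (9x - 8y).  The one at b is positive; a right
   angle at a forces 8x = 9y, hence (x, y) = (9, 8) by coprimality, and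
   9^2 + 8^2 = 145 is not a square; a right angle at c forces 9x = 8y,
   contradicting the parity of x. *)

Set Implicit Arguments.
Unset Strict Implicit.
Unset Printing Implicit Defensive.
Import Order.TTheory GRing.Theory Num.Theory.
Local Open Scope ring_scope.

Section Space3.
Variable R : realType.

Definition vec3 (a0 a1 a2 : R) : 'cV[R]_3 := \col_(i < 3) nth 0 [:: a0; a1; a2] i.

Lemma vec3_surj (u : 'cV[R]_3) : exists a0 a1 a2, u = vec3 a0 a1 a2.
Proof.
exists (u ord0 0), (u (lift ord0 ord0) 0), (u ord_max 0).
apply/matrixP => -[[|[|[|//]]] ?] j;
by rewrite (ord1 j) !mxE /=; congr (u _ _); apply/val_inj.
Qed.

Lemma vec3B a0 a1 a2 b0 b1 b2 :
  vec3 a0 a1 a2 - vec3 b0 b1 b2 = vec3 (a0 - b0) (a1 - b1) (a2 - b2).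
Proof. by apply/matrixP => -[[|[|[|//]]] ?] j; rewrite !mxE. Qed.

Lemma vec3N a0 a1 a2 : - vec3 a0 a1 a2 = vec3 (- a0) (- a1) (- a2).
Proof. by apply/matrixP => -[[|[|[|//]]] ?] j; rewrite !mxE. Qed.

Lemma vec3_eq0 a0 a1 a2 : (vec3 a0 a1 a2 == 0) = [&& a0 == 0, a1 == 0 & a2 == 0].
Proof.
apply/eqP/and3P => [/matrixP v0 | [/eqP-> /eqP-> /eqP->]].
  split; apply/eqP;
    [move: (v0 ord0 0) | move: (v0 (lift ord0 ord0) 0) | move: (v0 ord_max 0)];
  by rewrite !mxE.
by apply/matrixP => -[[|[|[|//]]] ?] j; rewrite !mxE.
Qed.

Lemma dot3_vec3 a0 a1 a2 b0 b1 b2 :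
  dot3 (vec3 a0 a1 a2) (vec3 b0 b1 b2) = a0 * b0 + a1 * b1 + a2 * b2.
Proof. by rewrite /dot3 !mxE !big_ord_recr big_ord0 /= !mxE /= add0r. Qed.

Lemma dot3_gt0 (u : 'cV[R]_3) : u != 0 -> 0 < dot3 u u.
Proof.
have [a0 [a1 [a2 ->]]] := vec3_surj u.
rewrite vec3_eq0 dot3_vec3 -!expr2 lt_def !addr_ge0 ?sqr_ge0 // andbT.
by apply: contra; rewrite !paddr_eq0 ?addr_ge0 ?sqr_ge0 // !sqrf_eq0 -andbA.
Qed.

Lemma dot3_sqr_le (u v : 'cV[R]_3) : dot3 u v ^+ 2 <= dot3 u u * dot3 v v.
Proof.
have [u0 [u1 [u2 ->]]] := vec3_surj u; have [v0 [v1 [v2 ->]]] := vec3_surj v.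
rewrite !dot3_vec3 -subr_ge0.
have -> : (u0 * u0 + u1 * u1 + u2 * u2) * (v0 * v0 + v1 * v1 + v2 * v2)
          - (u0 * v0 + u1 * v1 + u2 * v2) ^+ 2
        = (u0 * v1 - u1 * v0) ^+ 2 + (u0 * v2 - u2 * v0) ^+ 2
          + (u1 * v2 - u2 * v1) ^+ 2 by ring.
by rewrite !addr_ge0 ?sqr_ge0.
Qed.

Lemma vangle_eq_pihalf (u v : 'cV[R]_3) :
  u != 0 -> v != 0 -> vangle u v = pi / 2 <-> dot3 u v = 0.
Proof.
move=> /dot3_gt0 uu_gt0 /dot3_gt0 vv_gt0.
have nuv_gt0 : 0 < norm3 u * norm3 v by rewrite mulr_gt0 ?sqrtr_gt0.
rewrite /vangle; set t := dot3 u v / _.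
(* Cauchy-Schwarz keeps [t] in the range where [acos] inverts [cos]. *)
have t2_le1 : t ^+ 2 <= 1.
  rewrite expr_div_n ler_pdivrMr ?exprn_gt0 // mul1r exprMn.
  by rewrite !sqr_sqrtr ?(ltW uu_gt0, ltW vv_gt0) // dot3_sqr_le.
have t_itv : t \in `[-1, 1] by rewrite in_itv /=; apply/andP; split; nra.
split=> [/(congr1 cos) | uv0]; last by rewrite /t uv0 mul0r acos0.
rewrite acosK // cos_pihalf /t => /eqP.
by rewrite mulf_eq0 invr_eq0 (gt_eqF nuv_gt0) orbF => /eqP.
Qed.

Lemma rank_row_mx_vec3 (a0 a1 a2 b0 b1 b2 : R) : a0 * b1 - a1 * b0 != 0 ->
  \rank (row_mx (vec3 a0 a1 a2) (vec3 b0 b1 b2)) = 2%N.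
Proof.
set d := a0 * b1 - a1 * b0 => d_neq0.
(* [L] is the inverse of the upper 2x2 block, padded with a zero column. *)
pose L : 'M[R]_(2, 3) := \matrix_(i < 2, k < 3)
  (nth 0 [:: nth 0 [:: b1; - a1] i; nth 0 [:: - b0; a0] i; 0] k / d).
have entryE k (j : 'I_2) : row_mx (vec3 a0 a1 a2) (vec3 b0 b1 b2) k j
    = nth 0 [:: vec3 a0 a1 a2 k 0; vec3 b0 b1 b2 k 0] j.
  by rewrite mxE; case: splitP => l ->; rewrite (ord1 l).
have LM : L *m row_mx (vec3 a0 a1 a2) (vec3 b0 b1 b2) = 1%:M.
  apply/matrixP => -[[|[|//]] ?] -[[|[|//]] ?];
  by rewrite [LHS]mxE !big_ord_recr big_ord0 /= !entryE !mxE /= /d;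
    field; exact: d_neq0.
by apply/eqP; rewrite eqn_leq rank_leq_col /= -{1}(mxrank1 R 2) -LM mxrankM_maxr.
Qed.

Lemma pt_mx3 (a0 a1 a2 b0 b1 b2 c0 c1 c2 : int) (x y z : nat) :
  pt R (mx3 (a0, a1, a2) (b0, b1, b2) (c0, c1, c2)) (trip x y z) =
  vec3 (a0%:~R * x%:R + a1%:~R * y%:R + a2%:~R * z%:R)
       (b0%:~R * x%:R + b1%:~R * y%:R + b2%:~R * z%:R)
       (c0%:~R * x%:R + c1%:~R * y%:R + c2%:~R * z%:R).
Proof.
apply/matrixP => -[[|[|[|//]]] ?] j;
by rewrite !mxE !big_ord_recr big_ord0 /= !mxE /= add0r !intrD !intrM.
Qed.

Lemma triangle_edges (x y z : nat) :
  let X : R := x%:R in let Y : R := y%:R in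
  let a := pt R matA (trip x y z) in
  let b := pt R matB (trip x y z) in
  let c := pt R matC (trip x y z) in
  [/\ b - a = vec3 (4 * Y) (2 * Y) (4 * Y),
      c - b = vec3 (- 2 * X) (- 4 * X) (- 4 * X)
    & c - a = vec3 (4 * Y - 2 * X) (2 * Y - 4 * X) (4 * Y - 4 * X)].
Proof. by rewrite /= !pt_mx3 !vec3B; split; congr vec3; ring. Qed.

End Space3.

Lemma coprime_mul_eq (a b x y : nat) : (a * x = b * y)%N -> (0 < b)%N ->
  coprime a b -> coprime x y -> x = b /\ y = a.
Proof.
rewrite coprime_sym => eq_ax_by b_gt0 co_ba co_xy.
have /dvdnP[k x_eq] : (b %| x)%N by rewrite -(Gauss_dvdr _ co_ba) eq_ax_by dvdn_mulr.
have y_eq : y = (k * a)%N.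
  by apply/eqP; rewrite -(eqn_pmul2l b_gt0) -eq_ax_by x_eq; apply/eqP; ring.
have : (k %| gcdn x y)%N by rewrite dvdn_gcd x_eq y_eq !dvdn_mulr.
by rewrite (eqP co_xy) dvdn1 x_eq y_eq => /eqP->; rewrite !mul1n.
Qed.

Lemma expn2_neq145 (z : nat) : (z ^ 2 != 145)%N.
Proof. by apply/eqP => z2; have [z_le12 | z_gt12] := leqP z 12; nia. Qed.

Theorem mainTheorem13 (R : realType) (x y z : nat) :
  primitive_pyth x y z ->
  let a : 'cV[R]_3 := pt R matA (trip x y z) in
  let b : 'cV[R]_3 := pt R matB (trip x y z) in
  let c : 'cV[R]_3 := pt R matC (trip x y z) in
  is_triangle a b c /\ ~ right_triangle a b c.
Proof.
case=> [[x_gt0 [y_gt0 _]] pyth cop odd_x] a b c.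
have [ba cb ca] := triangle_edges R x y z.
have X_gt0 : 0 < x%:R :> R by rewrite ltr0n.
have Y_gt0 : 0 < y%:R :> R by rewrite ltr0n.
have ba_neq0 : b - a != 0 by rewrite ba vec3_eq0; apply/and3P => -[/eqP]; lra.
have cb_neq0 : c - b != 0 by rewrite cb vec3_eq0; apply/and3P => -[/eqP]; lra.
have ca_neq0 : c - a != 0.
  by rewrite ca vec3_eq0; apply/and3P => -[/eqP ? /eqP]; lra.
split.
  by rewrite /is_triangle ba ca rank_row_mx_vec3 //; apply/eqP; nra.
rewrite /right_triangle /tri_angle -[a - b]opprB -[a - c]opprB -[b - c]opprB.
case=> [|[|]] /vangle_eq_pihalf; rewrite ?oppr_eq0.
- move=> /(_ ba_neq0 ca_neq0); rewrite ba ca dot3_vec3 => dot0.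
  have eq_8x_9y : (8 * x = 9 * y)%N.
    by apply/eqP; rewrite -(eqr_nat R) !natrM; apply/eqP; nra.
  have [x9 y8] := coprime_mul_eq eq_8x_9y isT isT cop.
  by move: (expn2_neq145 z); rewrite -pyth x9 y8.
- by move=> /(_ cb_neq0 ba_neq0); rewrite cb ba vec3N dot3_vec3; nra.
- move=> /(_ ca_neq0 cb_neq0); rewrite ca cb !vec3N dot3_vec3 => dot0.
  have eq_9x_8y : (9 * x = 8 * y)%N.
    by apply/eqP; rewrite -(eqr_nat R) !natrM; apply/eqP; nra.
  by have := congr1 odd eq_9x_8y; rewrite !oddM odd_x.
Qed.
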